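(* Under the hypotheses of Theorem 2 (Assumptions A, B, C, D; Algorithm 2; $T=\beta/\varepsilon$; $\eta^{(t)}=D\sqrt\varepsilon$; $\alpha_i^{(t)}=(1+\varepsilon)^t\frac{\alpha}{e^\beta L_\phi}$ with $\alpha\in(0,\tfrac14)$), $$\frac1T\sum_{t=0}^{T-1}\frac1n\sum_{i=1}^n\big[f(w^{(t)};i)-\phi_i(h_i^* )\big]\le\frac{e^{\beta}L_\phi(1+\varepsilon)}{2(1-4\alpha)\alpha\beta}\cdot\frac1n\sum_{i=1}^n\|h(w^{(0)};i)-h_i^*\|^2\cdot\varepsilon+\frac{e^{\beta}L_\phi(4\varepsilon+3)}{2\alpha(1-4\alpha)}\Big[D^2H^2+c\big(2+(V+\varepsilon^2+2)GD^2\big)^2+2+V\Big]\varepsilon.$$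
   Context: Let $n,c,d$ be positive integers and $[n]=\{1,\dots,n\}$. For each $i\in[n]$ let $h(\cdot;i):\mathbb{R}^d\to\mathbb{R}^c$ (components $h_j(\cdot;i)$) and $\phi_i:\mathbb{R}^c\to\mathbb{R}$; $f(w;i)=\phi_i(h(w;i))$. Each $\phi_i$ attains its minimum at $h_i^*$. Norms: Euclidean for vectors, operator for matrices. Assumption A: each $\phi_i$ is convex, bounded below, and $L_\phi$-smooth. Assumption B: each $h(\cdot;i)$ is twice continuously differentiable and there is $G>0$ with $\|\nabla_w^2 h_j(w;i)\|\le G$ for all $w,i,j$. Iteration setup: given $\varepsilon>0$, $\eta^{(t)}>0$, $\alpha_i^{(t)}>0$ and iterates $w^{(t)}$, let $H_i^{(t)}$ be the Jacobian of $h(\cdot;i)$ at $w^{(t)}$, $\Phi^{(t)}(v)=\frac{1}{2n}\sum_{i=1}^n\|\eta^{(t)}H_i^{(t)}v-\alpha_i^{(t)}\nabla\phi_i(h(w^{(t)};i))\|^2$, $\Psi^{(t)}(v)=\Phi^{(t)}(v)+\frac{\varepsilon^2}{2}\|v\|^2$, $v_{*\mathrm{reg}}^{(t)}$ its unique minimizer. Algorithm 2: $w^{(0)}$ arbitrary, $w^{(t+1)}=w^{(t)}-\eta^{(t)}v^{(t)}$ where $\|v^{(t)}-v_{*\mathrm{reg}}^{(t)}\|\le\varepsilon$, $t=0,\dots,T-1$, with $T=\beta/\varepsilon$ an integer, $\beta>0$. Assumption C (constant $V>0$): for each $0\le t<T$ there is $\hat v^{(t)}$ with $\|\hat v^{(t)}\|^2\le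 V$ and $\Phi^{(t)}(\hat v^{(t)})\le\varepsilon^2$. Assumption D (constant $H>0$): $\|H_i^{(t)}\|\le H/\sqrt\varepsilon$ for all $i\in[n]$, $0\le t<T$. *)

From HB Require Import structures.
From mathcomp Require Import all_boot all_order all_algebra.
From mathcomp Require Import all_classical all_reals all_analysis.
Set Implicit Arguments. Unset Strict Implicit. Unset Printing Implicit Defensive.
Import Order.TTheory GRing.Theory Num.Theory.
Import numFieldNormedType.Exports.
Local Open Scope ring_scope.

Definition sqnorm (R : realType) (m : nat) (v : 'cV[R]_m) : R :=
  \sum_(k < m) (v k ord0) ^+ 2.
Definition enorm (R : realType) (m : nat) (v : 'cV[R]_m) : R :=
  Num.sqrt (sqnorm v).

Definition ubasis (R : realType) (m : nat) (k : 'I_m) : 'cV[R]_m := delta_mx k ord0.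

Definition partial (R : realType) (m : nat) (f : 'cV[R]_m -> R) (k : 'I_m)
  (x : 'cV[R]_m) : R := derive f x (ubasis R k).
Definition grad (R : realType) (m : nat) (f : 'cV[R]_m -> R) (x : 'cV[R]_m)
  : 'cV[R]_m := \col_k partial f k x.
Definition hess (R : realType) (m : nat) (f : 'cV[R]_m -> R) (x : 'cV[R]_m)
  : 'M[R]_m := \matrix_(k, l) partial (partial f l) k x.

Definition hcomp (R : realType) (c d : nat) (h : 'cV[R]_d -> 'cV[R]_c) (j : 'I_c)
  : 'cV[R]_d -> R := fun w => h w j ord0.
Definition jac (R : realType) (c d : nat) (h : 'cV[R]_d -> 'cV[R]_c) (w : 'cV[R]_d)
  : 'M[R]_(c, d) := \matrix_(j, k) partial (hcomp h j) k w.

Definition op_norm_le (R : realType) (p q : nat) (A : 'M[R]_(p, q)) (b : R) : Prop :=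
  forall v : 'cV[R]_q, enorm (A *m v) <= b * enorm v.

Definition convex_fn (R : realType) (m : nat) (f : 'cV[R]_m -> R) : Prop :=
  forall (x y : 'cV[R]_m) (t : R), 0 <= t <= 1 ->
    f (t *: x + (1 - t) *: y) <= t * f x + (1 - t) * f y.
Definition bounded_below (R : realType) (m : nat) (f : 'cV[R]_m -> R) : Prop :=
  exists b : R, forall x, b <= f x.
Definition Lsmooth (R : realType) (m : nat) (L : R) (f : 'cV[R]_m -> R) : Prop :=
  (forall x, differentiable f x) /\
  (forall x y, enorm (grad f x - grad f y) <= L * enorm (x - y)).
Definition C2 (R : realType) (m : nat) (f : 'cV[R]_m -> R) : Prop :=
  (forall x, differentiable f x) /\
  (forall k x, differentiable (partial f k) x) /\
  (forall k l, continuous (fun x => hess f x k l)).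

Definition PhiF (R : realType) (n c d : nat) (h : 'I_n -> 'cV[R]_d -> 'cV[R]_c)
  (phi : 'I_n -> 'cV[R]_c -> R) (eta : R) (al : 'I_n -> R) (w u : 'cV[R]_d) : R :=
  (2 * n%:R)^-1 * \sum_(i < n)
     sqnorm (eta *: (jac (h i) w *m u) - al i *: grad (phi i) (h i w)).
Definition PsiF (R : realType) (n c d : nat) (h : 'I_n -> 'cV[R]_d -> 'cV[R]_c)
  (phi : 'I_n -> 'cV[R]_c -> R) (eta : R) (al : 'I_n -> R) (eps : R)
  (w u : 'cV[R]_d) : R :=
  PhiF h phi eta al w u + eps ^+ 2 / 2 * sqnorm u.

From HB Require Import structures.
From mathcomp Require Import all_boot all_order all_algebra.
From mathcomp Require Import all_classical all_reals all_analysis.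
From mathcomp Require Import ring lra.
Import Order.TTheory GRing.Theory Num.Theory.
Import numFieldNormedType.Exports.
Local Open Scope ring_scope.
Set Implicit Arguments. Unset Strict Implicit.

(* Write a_i = h(w^t; i) - h_i^* and g_i = grad phi_i (h(w^t; i)).  One iteration moves
   h(.; i) by -alpha_i^t g_i up to three errors: the Taylor remainder of h (Hessian bound G,
   step eta^2 = D^2 eps), the residual of the regularized least-squares problem (controlled
   by comparing with the vector of Assumption C) and the inexactness of v^t (Jacobian bound
   H / sqrt eps).  Convexity and L-smoothness of phi_i make the ideal step a contraction,
   |a - alpha g|^2 <= |a|^2 - 2 alpha (1 - 2 alpha L) (phi_i(h) - phi_i(h_i^* )),
   and the errors cost a factor 1 + eps plus O(eps).  Because alpha_i^t grows like
   (1 + eps)^t, the rescaled mean distance (1 + eps)^-t |a|^2 telescopes, while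
   (1 + eps)^T <= e^beta keeps alpha_i^t L below alpha; dividing by T = beta / eps gives
   the bound. *)

Section EuclideanAlgebra.
Variables (R : realType) (m : nat).
Implicit Types a b e : 'cV[R]_m.

Definition dot a b : R := \sum_(k < m) a k ord0 * b k ord0.

Lemma dotC a b : dot a b = dot b a.
Proof. by apply: eq_bigr => k _; rewrite mulrC. Qed.

Lemma dotZr (s : R) a b : dot a (s *: b) = s * dot a b.
Proof. by rewrite /dot mulr_sumr; apply: eq_bigr => k _; rewrite !mxE mulrCA. Qed.

Lemma dotNr a b : dot a (- b) = - dot a b.
Proof. by rewrite /dot -sumrN; apply: eq_bigr => k _; rewrite !mxE mulrN. Qed.

Lemma dotBr a b e : dot a (b - e) = dot a b - dot a e.
Proof. by rewrite /dot -sumrB; apply: eq_bigr => k _; rewrite !mxE mulrBr. Qed.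

Lemma dotBl a b e : dot (a - b) e = dot a e - dot b e.
Proof. by rewrite dotC dotBr !(dotC e). Qed.

Lemma dot_sqnorm a : dot a a = sqnorm a.
Proof. by apply: eq_bigr => k _; rewrite expr2. Qed.

Lemma sqnorm_ge0 a : 0 <= sqnorm a.
Proof. by apply: sumr_ge0 => k _; apply: sqr_ge0. Qed.

Lemma sqnormN a : sqnorm (- a) = sqnorm a.
Proof. by apply: eq_bigr => k _; rewrite !mxE sqrrN. Qed.

Lemma sqnormZ (s : R) a : sqnorm (s *: a) = s ^+ 2 * sqnorm a.
Proof. by rewrite /sqnorm mulr_sumr; apply: eq_bigr => k _; rewrite !mxE exprMn. Qed.

Lemma sqnormD a b : sqnorm (a + b) = sqnorm a + 2 * dot a b + sqnorm b.
Proof.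
rewrite /sqnorm /dot mulr_sumr -!big_split /=; apply: eq_bigr => k _.
by rewrite !mxE; ring.
Qed.

Lemma sqnormB a b : sqnorm (a - b) = sqnorm a - 2 * dot a b + sqnorm b.
Proof. by rewrite sqnormD dotNr sqnormN mulrN. Qed.

Lemma dot_young (s : R) a b : 0 < s ->
  2 * dot a b <= s * sqnorm a + s^-1 * sqnorm b.
Proof.
move=> s_gt0; rewrite /dot /sqnorm !mulr_sumr -big_split /=.
apply: ler_sum => k _; set x := a k ord0; set y := b k ord0.
have -> : s * x ^+ 2 + s^-1 * y ^+ 2 = 2 * (x * y) + s^-1 * (s * x - y) ^+ 2.
  by field; rewrite gt_eqF.
by rewrite lerDl mulr_ge0 ?sqr_ge0 // invr_ge0 ltW.
Qed.

Lemma sqnormD_le_weighted (s : R) a b : 0 < s ->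
  sqnorm (a + b) <= (1 + s) * sqnorm a + (1 + s^-1) * sqnorm b.
Proof. by move=> s_gt0; rewrite sqnormD; have := dot_young a b s_gt0; lra. Qed.

Lemma sqnormD3_le a b e :
  sqnorm (a + b + e) <= 3 * (sqnorm a + sqnorm b + sqnorm e).
Proof.
rewrite /sqnorm -!big_split mulr_sumr /=; apply: ler_sum => k _; rewrite !mxE.
set x := a k ord0; set y := b k ord0; set z := e k ord0.
have := sqr_ge0 (x - y); have := sqr_ge0 (y - z); have := sqr_ge0 (x - z).
nra.
Qed.

Lemma sqnorm_le_of_enorm a (r : R) : enorm a <= r -> sqnorm a <= r ^+ 2.
Proof.
move=> ar; have a_ge0 : 0 <= enorm a by exact: sqrtr_ge0.
by rewrite -[sqnorm a]sqr_sqrtr ?sqnorm_ge0 // lerXn2r // ?nnegrE (le_trans a_ge0).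
Qed.

End EuclideanAlgebra.

Lemma sqnorm_le_mul_of_enorm (R : realType) (p q : nat) (a : 'cV[R]_p)
    (b : 'cV[R]_q) (r : R) :
  enorm a <= r * enorm b -> sqnorm a <= r ^+ 2 * sqnorm b.
Proof. by move/sqnorm_le_of_enorm; rewrite exprMn /enorm sqr_sqrtr // sqnorm_ge0. Qed.

Lemma sqnorm_mulmx_le (R : realType) (p q : nat) (A : 'M[R]_(p, q)) (r : R)
    (u : 'cV[R]_q) :
  op_norm_le A r -> sqnorm (A *m u) <= r ^+ 2 * sqnorm u.
Proof. by move/(_ u)/sqnorm_le_mul_of_enorm. Qed.

Section Differentials.
Local Open Scope classical_set_scope.
Local Open Scope ring_scope.
Variables (R : realType) (m : nat).
Implicit Types (u x y : 'cV[R]_m) (F : 'cV[R]_m -> R).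

Lemma cV_sum_ubasis u : u = \sum_(l < m) u l ord0 *: ubasis R l.
Proof. by rewrite {1}(matrix_sum_delta u); apply: eq_bigr => l _; rewrite big_ord1. Qed.

Lemma derive_sum_partial F y u : differentiable F y ->
  derive F y u = \sum_(l < m) u l ord0 * partial F l y.
Proof.
move=> dF; rewrite deriveE // {1}(cV_sum_ubasis u) linear_sum.
by apply: eq_bigr => l _; rewrite linearZ /= /partial deriveE.
Qed.

Lemma derive_grad F x u : differentiable F x -> derive F x u = dot (grad F x) u.
Proof.
move=> dF; rewrite derive_sum_partial //; apply: eq_bigr => l _.
by rewrite /grad mxE mulrC.
Qed.

Lemma is_derive_line F x u s : differentiable F (x + s *: u) ->
  is_derive s 1 (fun r : R => F (x + r *: u)) (derive F (x + s *: u) u).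
Proof.
move=> dF.
have E : (fun h : R => h^-1 *: (((fun r : R => F (x + r *: u)) \o shift s) (h *: 1)
            - F (x + s *: u)))
       = (fun h : R => h^-1 *: ((F \o shift (x + s *: u)) (h *: u) - F (x + s *: u))).
  apply/funext => h /=; congr (_ *: (F _ - _)).
  by rewrite [h%:A]mulr1 scalerDl addrCA.
constructor; first by rewrite /derivable E; exact: diff_derivable.
by rewrite /derive E.
Qed.

Lemma convex_derive_le F x y : convex_fn F -> differentiable F x ->
  derive F x (y - x) <= F y - F x.
Proof.
move=> cF dF; have dv : derivable F x (y - x) by exact: diff_derivable.
rewrite /derive; set q := (fun h : R => _).
have qlim : q @ 0^'+ --> lim (q @ 0^').
  apply: cvg_trans dv; apply: cvg_app; apply: within_subset => r /= r0.
  by rewrite gt_eqF.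
apply: (cvgr_to_le qlim); near=> r.
have r_gt0 : 0 < r by near: r; exact: nbhs_right_gt.
have r_lt1 : r < 1 by near: r; exact: nbhs_right_lt.
rewrite /q /=.
have -> : r *: (y - x) + x = r *: y + (1 - r) *: x.
  by apply/matrixP => i j; rewrite !mxE; ring.
have := cF y x r; rewrite (ltW r_gt0) (ltW r_lt1) => /(_ isT) Fr.
by rewrite /GRing.scale /= ler_pdivrMl //; lra.
Unshelve. all: by end_near.
Qed.

Lemma convex_grad_le F x y : convex_fn F -> differentiable F x ->
  dot (grad F x) (y - x) <= F y - F x.
Proof. by move=> cF dF; rewrite -derive_grad //; exact: convex_derive_le. Qed.

End Differentials.

Section RealTaylor.
Local Open Scope classical_set_scope.
Local Open Scope ring_scope.
Variable R : realType.

Lemma taylor2_le (g p : R -> R) (K : R) :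
  (forall s : R, is_derive s (1 : R) g (p s)) -> (forall s : R, derivable p s 1) ->
  (forall s : R, derive1 p s <= K) -> g 1 - g 0 - p 0 <= K / 2.
Proof.
move=> dg dp pK.
pose q s := g s - s * p 0 - K / 2 * (s * s).
have dq s : is_derive s (1 : R) q (p s - p 0 - K * s).
  have -> : q = g - (fun s => p 0 *: s) - (K / 2) \*: (fun s : R => s * s).
    by apply/funext => r /=; rewrite /q /GRing.scale /= mulrC.
  by apply: is_derive_eq; rewrite /GRing.scale /= !mulr1; lra.
have cq : {within `[0, 1], continuous q}.
  by apply: derivable_within_continuous => s _; case: (dq s).
have [s s01 Es] := MVT ltr01 (fun s _ => dq s) cq.
have s_gt0 : 0 < s by move: s01; rewrite in_itv /= => /andP[].
have dp' x : is_derive x (1 : R) p (derive1 p x).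
  by rewrite derive1E; exact: derivableP (dp x).
have cp : {within `[0, s], continuous p}.
  by apply: derivable_within_continuous => r _; exact: dp.
have [s' _ Es'] := MVT s_gt0 (fun x _ => dp' x) cp.
move: Es Es'; rewrite /q /= !subr0 !mulr1 !mul0r !mulr0 !subr0 mul1r => Es Es'.
have : derive1 p s' * s <= K * s by rewrite ler_pM2r.
lra.
Qed.

Lemma taylor2_abs_le (g p : R -> R) (K : R) :
  (forall s : R, is_derive s (1 : R) g (p s)) -> (forall s : R, derivable p s 1) ->
  (forall s : R, `|derive1 p s| <= K) -> `|g 1 - g 0 - p 0| <= K / 2.
Proof.
move=> dg dp pK; rewrite ler_norml; apply/andP; split; last first.
  by apply: taylor2_le => // s; have := pK s; rewrite ler_norml => /andP[].
have dgN s : is_derive s (1 : R) (- g) (- p s) by exact: is_deriveN.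
have dpN s : derivable (- p) s 1 by exact: derivableN.
have pNK s : derive1 (- p) s <= K.
  rewrite !derive1E deriveN; have := pK s; by rewrite derive1E ler_norml lerNl => /andP[].
by have := taylor2_le dgN dpN pNK; rewrite !opprfctE; lra.
Qed.

End RealTaylor.

Lemma taylor2_cV_abs_le (R : realType) (m : nat) (F : 'cV[R]_m -> R) (x u : 'cV[R]_m) (K : R) :
  (forall y, differentiable F y) -> (forall l y, differentiable (partial F l) y) ->
  (forall y, `|dot u (hess F y *m u)| <= K) ->
  `|F (x + u) - F x - \sum_(l < m) u l ord0 * partial F l x| <= K / 2.
Proof.
move=> dF dP hK.
pose g s := F (x + s *: u).
pose pl l s := partial F l (x + s *: u).
pose p s := \sum_(l < m) u l ord0 * pl l s.
have dg s : is_derive s (1 : R) g (p s).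
  by apply: is_derive_eq; [exact: is_derive_line | rewrite derive_sum_partial].
have dp s : is_derive s (1 : R) p
    (\sum_(l < m) u l ord0 * derive (partial F l) (x + s *: u) u).
  have -> : p = \sum_(l < m) (u l ord0 \*: pl l) by apply/funext => r; rewrite fct_sumE.
  by apply: is_derive_sum => l; apply: is_deriveZ; exact: is_derive_line.
have dp1 s : derivable p s 1 by case: (dp s).
have := @taylor2_abs_le R g p K dg dp1.
rewrite /g /p /pl scale1r scale0r addr0; apply => s.
rewrite derive1E derive_val; set y := x + s *: u.
suff -> : \sum_(l < m) u l ord0 * derive (partial F l) y u = dot u (hess F y *m u) by [].
transitivity (\sum_(l < m) \sum_(k < m) u l ord0 * (u k ord0 * partial (partial F l) k y)).
  by apply: eq_bigr => l _; rewrite derive_sum_partial // mulr_sumr.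
rewrite /dot exchange_big; apply: eq_bigr => k _; rewrite mxE mulr_sumr.
by apply: eq_bigr => l _; rewrite /hess mxE mulrCA (mulrC (u l ord0)).
Qed.

Lemma dot_mulmx_abs_le (R : realType) (m : nat) (A : 'M[R]_m) (G : R) (u : 'cV[R]_m) :
  0 < G -> op_norm_le A G -> `|dot u (A *m u)| <= G * sqnorm u.
Proof.
move=> G_gt0 HA.
have Au : G^-1 * sqnorm (A *m u) <= G * sqnorm u.
  rewrite -ler_pdivlMl ?invr_gt0 // invrK mulrA -expr2.
  exact: sqnorm_mulmx_le.
have := dot_young u (A *m u) G_gt0; have := dot_young u (- (A *m u)) G_gt0.
rewrite dotNr sqnormN ler_norml => ? ?; apply/andP; split; lra.
Qed.

(* Compare F at the gradient step y = x - g / (2 L): convexity at y and the Lipschitz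
   gradient give F y <= F x - |g|^2 / (4 L). *)
Lemma sqnorm_grad_le_gap (R : realType) (m : nat) (F : 'cV[R]_m -> R) (L : R)
    (xs x : 'cV[R]_m) :
  0 < L -> convex_fn F -> Lsmooth L F -> (forall z, F xs <= F z) ->
  sqnorm (grad F x) <= 4 * L * (F x - F xs).
Proof.
move=> L_gt0 cF [dF lipF] xs_min.
set g := grad F x; set s := (2 * L)^-1; set y := x - s *: g.
have xy : x - y = s *: g by rewrite /y opprB addrC subrK.
have cvx : dot (grad F y) (x - y) <= F x - F y := convex_grad_le x cF (dF y).
have lip : L^-1 * sqnorm (g - grad F y) <= L * sqnorm (x - y).
  rewrite -ler_pdivlMl ?invr_gt0 // invrK mulrA -expr2.
  exact/sqnorm_le_mul_of_enorm/lipF.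
have Li_gt0 : 0 < L^-1 by rewrite invr_gt0.
have yg := dot_young (g - grad F y) (x - y) Li_gt0; rewrite invrK in yg.
have gxy : dot g (x - y) = s * sqnorm g by rewrite xy dotZr dot_sqnorm.
have sxy : sqnorm (x - y) = s ^+ 2 * sqnorm g by rewrite xy sqnormZ.
have Ls : L * s ^+ 2 * sqnorm g = s * sqnorm g / 2 by rewrite /s; field; rewrite gt_eqF.
rewrite dotBl in yg; rewrite sxy mulrA Ls in lip yg.
have -> : sqnorm g = 4 * L * (s * sqnorm g / 2) by rewrite /s; field; rewrite gt_eqF.
rewrite ler_pM2l ?mulr_gt0 //; have := xs_min y; lra.
Qed.

Lemma sqnorm_grad_step_le (R : realType) (m : nat) (a g u : 'cV[R]_m) (k L Dl al e : R) :
  Dl <= dot g a -> sqnorm g <= 4 * L * Dl -> 0 <= Dl -> 0 <= k -> k * L <= al -> 0 < e ->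
  sqnorm (a - k *: g + u) <=
    (1 + e) * (sqnorm a - 2 * k * (1 - 2 * al) * Dl) + (1 + e^-1) * sqnorm u.
Proof.
move=> Dl_le g_le Dl_ge0 k_ge0 kL e_gt0.
have descent : sqnorm (a - k *: g) <= sqnorm a - 2 * k * (1 - 2 * al) * Dl.
  rewrite sqnormB sqnormZ dotZr dotC.
  have : k ^+ 2 * sqnorm g <= k ^+ 2 * (4 * L * Dl) by rewrite ler_wpM2l ?sqr_ge0.
  have : 0 <= k * Dl * (al - k * L) by rewrite !mulr_ge0 // subr_ge0.
  have : k * Dl <= k * dot g a by rewrite ler_wpM2l.
  nra.
apply: le_trans (sqnormD_le_weighted _ u e_gt0) _.
by rewrite lerD2r ler_wpM2l // addr_ge0 // ltW.
Qed.

Lemma linearization_error_le (R : realType) (c d : nat) (f : 'cV[R]_d -> 'cV[R]_c)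
    (x v : 'cV[R]_d) (eta G B : R) :
  0 < G -> (forall j, C2 (hcomp f j)) ->
  (forall j y, op_norm_le (hess (hcomp f j) y) G) ->
  G * (eta ^+ 2 * sqnorm v) / 2 <= B ->
  sqnorm (f (x - eta *: v) - f x + eta *: (jac f x *m v)) <= c%:R * B ^+ 2.
Proof.
move=> G_gt0 fC2 fhess GB.
rewrite /sqnorm -[c in c%:R](card_ord c) -sum1_card natr_sum mulr_suml.
apply: ler_sum => j _; rewrite mul1r.
set u := - (eta *: v); have [dF [dP _]] := fC2 j.
have := taylor2_cV_abs_le x dF dP (fun y => dot_mulmx_abs_le u G_gt0 (fhess j y)).
rewrite /u sqnormN sqnormZ -/u => /le_trans/(_ GB).
have -> : (f (x - eta *: v) - f x + eta *: (jac f x *m v)) j ord0 =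
    hcomp f j (x + u) - hcomp f j x - \sum_(l < d) u l ord0 * partial (hcomp f j) l x.
  rewrite !mxE /hcomp /u; congr (_ + _).
  rewrite mulr_sumr -sumrN; apply: eq_bigr => l _; rewrite !mxE.
  by rewrite mulNr opprK mulrCA mulrC.
by rewrite ler_norml => /andP[? ?]; nra.
Qed.

Lemma mean_le (R : realType) (n : nat) (x y z s : 'I_n -> R) (p k M C : R) :
  (0 < n)%N -> (forall i, s i <= p * (x i - k * y i) + M * (C + z i)) ->
  n%:R^-1 * \sum_(i < n) s i <=
  p * (n%:R^-1 * \sum_(i < n) x i - k * (n%:R^-1 * \sum_(i < n) y i))
  + M * (C + n%:R^-1 * \sum_(i < n) z i).
Proof.
move=> n_gt0 sle; have n_gt0' : 0 < n%:R :> R by rewrite ltr0n.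
have -> : p * (n%:R^-1 * \sum_(i < n) x i - k * (n%:R^-1 * \sum_(i < n) y i))
    + M * (C + n%:R^-1 * \sum_(i < n) z i)
    = n%:R^-1 * \sum_(i < n) (p * (x i - k * y i) + M * (C + z i)).
  rewrite big_split /= -!mulr_sumr big_split /= sumrN -mulr_sumr big_split /=.
  by rewrite sumr_const card_ord -mulr_natl; field; rewrite gt_eqF.
by rewrite ler_pM2l ?invr_gt0 //; apply: ler_sum => i _.
Qed.

Lemma telescope_le (R : realType) (T : nat) (A D : nat -> R) (q k b C : R) :
  1 <= q -> 0 <= C ->
  (forall t, (t < T)%N -> A t.+1 <= q * (A t - 2 * (q ^+ t * k) * b * D t) + C * q) ->
  0 <= A T ->
  2 * k * b * \sum_(t < T) D t <= A 0%N + C * T%:R.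
Proof.
move=> q_ge1 C_ge0 Astep AT_ge0.
have qt_gt0 t : 0 < q ^+ t by rewrite exprn_gt0 // (lt_le_trans ltr01).
suff S t : (t <= T)%N -> 2 * k * b * \sum_(i < t) D i + A t / q ^+ t <= A 0%N + C * t%:R.
  by have := S T (leqnn T); have := divr_ge0 AT_ge0 (ltW (qt_gt0 T)); lra.
elim: t => [|t IH] tT; first by rewrite big_ord0 expr0 divr1 !mulr0 add0r addr0.
have IH' := IH (ltnW tT).
have Adecay : A t.+1 / q ^+ t.+1 <= A t / q ^+ t - 2 * k * b * D t + C / q ^+ t.
  rewrite ler_pdivrMr ?qt_gt0 // exprS.
  have -> : (A t / q ^+ t - 2 * k * b * D t + C / q ^+ t) * (q * q ^+ t) =
      q * (A t - 2 * (q ^+ t * k) * b * D t) + C * q.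
    by field; rewrite gt_eqF.
  exact: Astep.
have : C / q ^+ t <= C by rewrite ler_pdivrMr // ler_peMr // exprn_ege1.
by rewrite big_ord_recr -addn1 natrD /=; lra.
Qed.

Lemma average_le_of_telescope (R : realType) (A0 K S L eb eps beta alpha : R) (T : nat) :
  0 <= A0 -> 0 <= K -> 0 < L -> 0 < eb -> 0 < eps -> 0 < beta -> 0 < alpha ->
  alpha < 1 / 4 -> T%:R = beta / eps ->
  2 * (alpha / (eb * L)) * (1 - 2 * alpha) * S <= A0 + 3 * eps * K * T%:R ->
  T%:R^-1 * S <= eb * L * (1 + eps) / (2 * (1 - 4 * alpha) * alpha * beta) * A0 * eps
   + eb * L * (4 * eps + 3) / (2 * alpha * (1 - 4 * alpha)) * K * eps.
Proof.
move=> A0_ge0 K_ge0 L_gt0 eb_gt0 eps_gt0 beta_gt0 alpha_gt0 alpha_lt T_def S_le.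
have ebL : 0 < eb * L by rewrite mulr_gt0.
have b4 : 0 < 1 - 4 * alpha by lra.
have b2 : 0 < 1 - 2 * alpha by lra.
set Y := A0 * eps / beta + 3 * eps * K.
have A0e : 0 <= A0 * eps / beta by rewrite divr_ge0 ?mulr_ge0 // ltW.
have eK : 0 <= eps * K by rewrite mulr_ge0 // ltW.
have Y_ge0 : 0 <= Y by rewrite /Y; lra.
have avg : T%:R^-1 * S <= eb * L / (2 * alpha * (1 - 2 * alpha)) * Y.
  have -> : eb * L / (2 * alpha * (1 - 2 * alpha)) * Y =
      T%:R^-1 * ((A0 + 3 * eps * K * T%:R) / (2 * (alpha / (eb * L)) * (1 - 2 * alpha))).
    by rewrite /Y T_def; field; rewrite !gt_eqF ?mulr_gt0.
  apply: ler_wpM2l; first by rewrite invr_ge0 ler0n.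
  by rewrite ler_pdivlMr ?mulr_gt0 ?invr_gt0 // mulrC.
apply: le_trans avg _.
have -> : eb * L * (1 + eps) / (2 * (1 - 4 * alpha) * alpha * beta) * A0 * eps
    + eb * L * (4 * eps + 3) / (2 * alpha * (1 - 4 * alpha)) * K * eps =
    eb * L / (2 * alpha * (1 - 4 * alpha)) *
      ((1 + eps) * (A0 * eps / beta) + (4 * eps + 3) * (eps * K)).
  by field; rewrite !gt_eqF.
have rate : eb * L / (2 * alpha * (1 - 2 * alpha)) <= eb * L / (2 * alpha * (1 - 4 * alpha)).
  by rewrite ler_pM2l // lef_pV2 ?posrE ?mulr_gt0 // ler_pM2l ?mulr_gt0 //; lra.
apply: le_trans (ler_wpM2r Y_ge0 rate) _.
rewrite ler_pM2l ?divr_gt0 ?mulr_gt0 // /Y.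
have := mulr_ge0 (ltW eps_gt0) A0e; have := mulr_ge0 (ltW eps_gt0) eK; lra.
Qed.

Lemma PhiF_ge0 (R : realType) (n c d : nat) (h : 'I_n -> 'cV[R]_d -> 'cV[R]_c)
    (phi : 'I_n -> 'cV[R]_c -> R) eta al w u : 0 <= PhiF h phi eta al w u.
Proof. by rewrite mulr_ge0 ?invr_ge0 ?mulr_ge0 ?sumr_ge0 // => i _; exact: sqnorm_ge0. Qed.

Lemma expr1D_le_expR (R : realType) (eps beta : R) (t T : nat) :
  0 < eps -> T%:R = beta / eps -> (t <= T)%N -> (1 + eps) ^+ t <= expR beta.
Proof.
move=> eps_gt0 T_def tT.
apply: (@le_trans _ _ (expR eps ^+ t)).
  by rewrite lerXn2r ?nnegrE ?expR_ge0 ?expR_ge1Dx //; lra.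
rewrite -expRM_natl ler_expR.
have -> : beta = T%:R * eps by rewrite T_def divfK // gt_eqF.
by rewrite ler_wpM2r ?ler_nat // ltW.
Qed.

Lemma growing_step_size_le (R : realType) (eps beta alpha L : R) (t T : nat) :
  0 < eps -> 0 <= alpha -> 0 < L -> T%:R = beta / eps -> (t <= T)%N ->
  (1 + eps) ^+ t * (alpha / (expR beta * L)) * L <= alpha.
Proof.
move=> eps_gt0 alpha_ge0 L_gt0 T_def tT.
have -> : (1 + eps) ^+ t * (alpha / (expR beta * L)) * L = (1 + eps) ^+ t / expR beta * alpha.
  by field; rewrite !gt_eqF ?expR_gt0.
apply: ler_piMl alpha_ge0 _; rewrite ler_pdivrMr ?expR_gt0 // mul1r.
exact: expr1D_le_expR eps_gt0 T_def tT.
Qed.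

Section OneStep.
Variables (R : realType) (n c d : nat).
Variables (h : 'I_n -> 'cV[R]_d -> 'cV[R]_c) (phi : 'I_n -> 'cV[R]_c -> R).
Variable hstar : 'I_n -> 'cV[R]_c.
Variables (Lphi G Hc V eps Dc alpha eta : R).
Hypothesis n_gt0 : (0 < n)%N.
Hypothesis hstar_min : forall i x, phi i (hstar i) <= phi i x.
Hypothesis Lphi_gt0 : 0 < Lphi.
Hypothesis phi_convex : forall i, convex_fn (phi i).
Hypothesis phi_smooth : forall i, Lsmooth Lphi (phi i).
Hypothesis G_gt0 : 0 < G.
Hypothesis h_C2 : forall i j, C2 (hcomp (h i) j).
Hypothesis h_hess : forall i j x, op_norm_le (hess (hcomp (h i) j) x) G.
Hypothesis eps_gt0 : 0 < eps.
Hypothesis eta_sq : eta ^+ 2 = Dc ^+ 2 * eps.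

Definition mean_sqdist (x : 'cV[R]_d) : R :=
  n%:R^-1 * \sum_(i < n) sqnorm (h i x - hstar i).

Definition mean_gap (x : 'cV[R]_d) : R :=
  n%:R^-1 * \sum_(i < n) (phi i (h i x) - phi i (hstar i)).

Definition lin_scale : R := 2 + (V + eps ^+ 2 + 2) * G * Dc ^+ 2.

Definition step_noise : R := Dc ^+ 2 * Hc ^+ 2 + c%:R * lin_scale ^+ 2 + 2 + V.

Lemma mean_sqdist_ge0 x : 0 <= mean_sqdist x.
Proof. by rewrite mulr_ge0 ?invr_ge0 ?ler0n ?sumr_ge0 // => i _; exact: sqnorm_ge0. Qed.

Lemma step_noise_ge0 : 0 <= V -> 0 <= step_noise.
Proof.
move=> V_ge0; rewrite /step_noise.
have := sqr_ge0 (Dc * Hc); have := mulr_ge0 (ler0n R c) (sqr_ge0 lin_scale).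
by rewrite exprMn; lra.
Qed.

Lemma reg_minimizer_bounds (a : 'I_n -> R) (w r vh : 'cV[R]_d) :
  (forall u, PsiF h phi eta a eps w r <= PsiF h phi eta a eps w u) ->
  sqnorm vh <= V -> PhiF h phi eta a w vh <= eps ^+ 2 ->
  2 * PhiF h phi eta a w r <= eps ^+ 2 * (2 + V) /\ sqnorm r <= 2 + V.
Proof.
move=> r_min vh_le vh_Phi; have := r_min vh; rewrite /PsiF.
have Phi_ge0 := PhiF_ge0 h phi eta a w r.
have e2_gt0 : 0 < eps ^+ 2 / 2 by rewrite divr_gt0 // exprn_gt0.
have := ler_wpM2l (ltW e2_gt0) vh_le; have := mulr_ge0 (ltW e2_gt0) (sqnorm_ge0 r).
move=> ? ? ?; split; first lra.
by rewrite -(ler_pM2l e2_gt0); lra.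
Qed.

Lemma linearization_step_le i (w v : 'cV[R]_d) :
  sqnorm v <= 2 * (2 + V) + 2 * eps ^+ 2 ->
  sqnorm (h i (w - eta *: v) - h i w + eta *: (jac (h i) w *m v))
    <= eps ^+ 2 * (c%:R * lin_scale ^+ 2).
Proof.
move=> v_le; rewrite mulrCA -exprMn.
apply: (linearization_error_le w G_gt0 (h_C2 i) (h_hess i)).
have GDe : 0 <= G * Dc ^+ 2 * eps := mulr_ge0 (mulr_ge0 (ltW G_gt0) (sqr_ge0 Dc)) (ltW eps_gt0).
have : G * Dc ^+ 2 * eps * sqnorm v <= G * Dc ^+ 2 * eps * (2 * (2 + V) + 2 * eps ^+ 2).
  exact: ler_wpM2l.
by rewrite eta_sq /lin_scale; have := ltW eps_gt0; lra.
Qed.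

Lemma jac_error_le i (w v r : 'cV[R]_d) :
  op_norm_le (jac (h i) w) (Hc / Num.sqrt eps) -> enorm (v - r) <= eps ->
  sqnorm (eta *: (jac (h i) w *m (v - r))) <= eps ^+ 2 * (Dc ^+ 2 * Hc ^+ 2).
Proof.
move=> J vr; rewrite sqnormZ eta_sq.
have J2 : sqnorm (jac (h i) w *m (v - r)) <= Hc ^+ 2 / eps * sqnorm (v - r).
  by have := sqnorm_mulmx_le (v - r) J; rewrite expr_div_n sqr_sqrtr // ltW.
have Jvr : sqnorm (jac (h i) w *m (v - r)) <= Hc ^+ 2 * eps.
  have -> : Hc ^+ 2 * eps = Hc ^+ 2 / eps * eps ^+ 2 by field; rewrite gt_eqF.
  apply: le_trans J2 _; apply: ler_wpM2l (sqnorm_le_of_enorm vr).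
  by rewrite divr_ge0 ?sqr_ge0 // ltW.
have : Dc ^+ 2 * eps * sqnorm (jac (h i) w *m (v - r)) <= Dc ^+ 2 * eps * (Hc ^+ 2 * eps).
  by rewrite ler_wpM2l // mulr_ge0 ?sqr_ge0 // ltW.
by have := ltW eps_gt0; lra.
Qed.

Lemma sqdist_step_le i (w v r : 'cV[R]_d) (a : R) :
  0 <= a -> a * Lphi <= alpha ->
  sqnorm v <= 2 * (2 + V) + 2 * eps ^+ 2 -> enorm (v - r) <= eps ->
  op_norm_le (jac (h i) w) (Hc / Num.sqrt eps) ->
  sqnorm (h i (w - eta *: v) - hstar i) <=
    (1 + eps) * (sqnorm (h i w - hstar i)
                 - 2 * a * (1 - 2 * alpha) * (phi i (h i w) - phi i (hstar i)))
    + 3 * (1 + eps^-1) * (eps ^+ 2 * (c%:R * lin_scale ^+ 2 + Dc ^+ 2 * Hc ^+ 2)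
        + sqnorm (eta *: (jac (h i) w *m r) - a *: grad (phi i) (h i w))).
Proof.
move=> a_ge0 aL v_le vr J.
(* The move of h(.; i) is the ideal step -a g perturbed by the Taylor remainder rho, the
   least-squares residual e1 and the inexactness e2 of v. *)
set x := h i w; set g := grad (phi i) x; set Jw := jac (h i) w.
set rho := h i (w - eta *: v) - x + eta *: (Jw *m v).
set e1 := eta *: (Jw *m r) - a *: g.
set e2 := eta *: (Jw *m (v - r)).
have -> : h i (w - eta *: v) - hstar i = (x - hstar i) - a *: g + (rho - e1 - e2).
  by rewrite /rho /e1 /e2 mulmxBr; apply/matrixP => k l; rewrite !mxE; ring.
have [dphi _] := phi_smooth i.
have lin : phi i x - phi i (hstar i) <= dot g (x - hstar i).
  have := convex_grad_le (hstar i) (phi_convex i) (dphi x).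
  by rewrite -/g -opprB dotNr; lra.
have gap_ge0 : 0 <= phi i x - phi i (hstar i) by rewrite subr_ge0.
have g_le := sqnorm_grad_le_gap x Lphi_gt0 (phi_convex i) (phi_smooth i) (hstar_min i).
apply: le_trans (sqnorm_grad_step_le (rho - e1 - e2) lin g_le gap_ge0 a_ge0 aL eps_gt0) _.
rewrite lerD2l [3 * _]mulrC -mulrA; apply: ler_wpM2l; first by rewrite addr_ge0 // invr_ge0 ltW.
apply: le_trans (sqnormD3_le rho (- e1) (- e2)) _; rewrite !sqnormN ler_pM2l //.
have := linearization_step_le i w v_le; have := jac_error_le J vr; rewrite -/x -/Jw.
lra.
Qed.

Lemma mean_sqdist_step (w v r vh : 'cV[R]_d) (a : R) :
  0 <= a -> a * Lphi <= alpha ->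
  (forall u, PsiF h phi eta (fun=> a) eps w r <= PsiF h phi eta (fun=> a) eps w u) ->
  enorm (v - r) <= eps ->
  sqnorm vh <= V -> PhiF h phi eta (fun=> a) w vh <= eps ^+ 2 ->
  (forall i, op_norm_le (jac (h i) w) (Hc / Num.sqrt eps)) ->
  mean_sqdist (w - eta *: v) <=
    (1 + eps) * (mean_sqdist w - 2 * a * (1 - 2 * alpha) * mean_gap w)
    + 3 * eps * step_noise * (1 + eps).
Proof.
move=> a_ge0 aL r_min vr vh_le vh_Phi J.
have [Phi_r r_le] := reg_minimizer_bounds r_min vh_le vh_Phi.
have v_le : sqnorm v <= 2 * (2 + V) + 2 * eps ^+ 2.
  have := sqnormD_le_weighted r (v - r) ltr01; rewrite addrC subrK invr1.
  by have := sqnorm_le_of_enorm vr; lra.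
have := @mean_le R n (fun i => sqnorm (h i w - hstar i))
  (fun i => phi i (h i w) - phi i (hstar i))
  (fun i => sqnorm (eta *: (jac (h i) w *m r) - a *: grad (phi i) (h i w)))
  (fun i => sqnorm (h i (w - eta *: v) - hstar i)) _ _ _ _ n_gt0
  (fun i => sqdist_step_le a_ge0 aL v_le vr (J i)).
have -> : n%:R^-1 * \sum_(i < n) sqnorm (eta *: (jac (h i) w *m r) - a *: grad (phi i) (h i w))
    = 2 * PhiF h phi eta (fun=> a) w r.
  by rewrite /PhiF; field; rewrite gt_eqF // ltr0n.
move/le_trans; apply; rewrite -mulrA lerD2l.
have -> : 3 * eps * step_noise * (1 + eps) = 3 * (1 + eps^-1) *
    (eps ^+ 2 * (c%:R * lin_scale ^+ 2 + Dc ^+ 2 * Hc ^+ 2) + eps ^+ 2 * (2 + V)).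
  by rewrite /step_noise; field; rewrite gt_eqF.
by rewrite ler_pM2l ?mulr_gt0 ?addr_gt0 ?invr_gt0 // lerD2l.
Qed.

End OneStep.

Theorem mainTheorem17 (R : realType) (n c d : nat)
  (h : 'I_n -> 'cV[R]_d -> 'cV[R]_c) (phi : 'I_n -> 'cV[R]_c -> R)
  (hstar : 'I_n -> 'cV[R]_c)
  (Lphi G Hc V eps beta Dc alpha : R) (T : nat) (w v : nat -> 'cV[R]_d) :
  (0 < n)%N -> (0 < c)%N -> (0 < d)%N ->
  (* each phi_i attains its minimum at hstar i *)
  (forall i x, phi i (hstar i) <= phi i x) ->
  (* Assumption A *)
  0 < Lphi ->
  (forall i, convex_fn (phi i)) ->
  (forall i, bounded_below (phi i)) ->
  (forall i, Lsmooth Lphi (phi i)) ->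
  (* Assumption B *)
  0 < G ->
  (forall i j, C2 (hcomp (h i) j)) ->
  (forall i j x, op_norm_le (hess (hcomp (h i) j) x) G) ->
  (* parameters *)
  0 < eps -> 0 < beta -> T%:R = beta / eps ->
  0 < Dc -> 0 < alpha < 1 / 4 ->
  let eta : R := Dc * Num.sqrt eps in
  let al : nat -> 'I_n -> R :=
    fun t _ => (1 + eps) ^+ t * (alpha / (expR beta * Lphi)) in
  (* Algorithm 2 *)
  (forall t, (t < T)%N -> w t.+1 = w t - eta *: v t) ->
  (forall t, (t < T)%N -> exists vr : 'cV[R]_d,
      (forall u, PsiF h phi eta (al t) eps (w t) vr <= PsiF h phi eta (al t) eps (w t) u)
      /\ enorm (v t - vr) <= eps) ->
  (* Assumption C *)
  0 < V ->
  (forall t, (t < T)%N -> exists vh : 'cV[R]_d,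
      sqnorm vh <= V /\ PhiF h phi eta (al t) (w t) vh <= eps ^+ 2) ->
  (* Assumption D *)
  0 < Hc ->
  (forall i t, (t < T)%N -> op_norm_le (jac (h i) (w t)) (Hc / Num.sqrt eps)) ->
  (T%:R)^-1 * \sum_(t < T) ((n%:R)^-1 *
      \sum_(i < n) (phi i (h i (w t)) - phi i (hstar i)))
  <= expR beta * Lphi * (1 + eps) / (2 * (1 - 4 * alpha) * alpha * beta)
       * ((n%:R)^-1 * \sum_(i < n) sqnorm (h i (w 0%N) - hstar i)) * eps
     + expR beta * Lphi * (4 * eps + 3) / (2 * alpha * (1 - 4 * alpha))
       * (Dc ^+ 2 * Hc ^+ 2
          + c%:R * (2 + (V + eps ^+ 2 + 2) * G * Dc ^+ 2) ^+ 2 + 2 + V) * eps.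
Proof.
move=> n_gt0 _ _ hstar_min Lphi_gt0 phi_convex _ phi_smooth G_gt0 h_C2 h_hess
  eps_gt0 beta_gt0 T_def _ /andP[alpha_gt0 alpha_lt] eta al w_next v_near V_gt0 v_hat
  _ jac_bound.
set kappa := alpha / (expR beta * Lphi).
have eta_sq : eta ^+ 2 = Dc ^+ 2 * eps by rewrite exprMn sqr_sqrtr // ltW.
have step t : (t < T)%N -> mean_sqdist h hstar (w t.+1) <=
    (1 + eps) * (mean_sqdist h hstar (w t)
      - 2 * ((1 + eps) ^+ t * kappa) * (1 - 2 * alpha) * mean_gap h phi hstar (w t))
    + 3 * eps * step_noise c G Hc V eps Dc * (1 + eps).
  move=> tT; have [r [r_min vr]] := v_near t tT; have [vh [vh_le vh_Phi]] := v_hat t tT.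
  rewrite w_next //.
  apply: (mean_sqdist_step n_gt0 hstar_min Lphi_gt0 phi_convex phi_smooth G_gt0 h_C2
    h_hess eps_gt0 eta_sq _ _ r_min vr vh_le vh_Phi (fun i => jac_bound i t tT)).
  - by rewrite mulr_ge0 ?exprn_ge0 ?divr_ge0 ?mulr_ge0 ?expR_ge0 ?ler_wpDr ?ltW.
  - exact: growing_step_size_le eps_gt0 (ltW alpha_gt0) Lphi_gt0 T_def (ltnW tT).
have q_ge1 : 1 <= 1 + eps by rewrite lerDl ltW.
have noise_ge0 := step_noise_ge0 c G Hc eps Dc (ltW V_gt0).
have C_ge0 : 0 <= 3 * eps * step_noise c G Hc V eps Dc by rewrite !mulr_ge0 // ltW.
have tel := telescope_le q_ge1 C_ge0 step (mean_sqdist_ge0 h hstar (w T)).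
exact: average_le_of_telescope (mean_sqdist_ge0 h hstar (w 0%N)) noise_ge0 Lphi_gt0
  (expR_gt0 beta) eps_gt0 beta_gt0 alpha_gt0 alpha_lt T_def tel.
Qed.
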